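(* Let $(y_1,x_1),\dots,(y_\ell,x_\ell)\in\mathbb{R}^3\times\mathbb{R}^3$, $c_1^2,\dots,c_\ell^2\ge0$, $\hat\mu\in\mathbb{R}$, and let $\hat{\mathcal{D}}$ be an admissible dual matrix. Suppose that $$-\hat\mu\|z_0\|_2^2+2\sum_{i=1}^\ell z_i^\top[\hat{\mathcal{D}}]_{0i}z_i-\sum_{i=1}^\ell z_0^\top\big(2[\hat{\mathcal{D}}]_{0i}-Q_i+c_i^2I_4\big)z_i\ge0\quad\text{for all }z_0,\dots,z_\ell\in\mathbb{R}^4.$$ Then $[\hat{\mathcal{D}}]_{0i}\succeq0$ for every $i=1,\dots,\ell$. Moreover, if $c_i^2\ne\lambda_{\min}(Q_i)$ and $c_i^2\ne\lambda_{\max}(Q_i)$, then $[\hat{\mathcal{D}}]_{0i}\succ0$.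
   Context: For $w=[w_1;w_2;w_3;w_4]\in\mathbb{S}^3$, $R(w)=\begin{bmatrix} w_1^2+w_2^2-w_3^2-w_4^2 & 2(w_2w_3-w_1w_4) & 2(w_2w_4+w_1w_3)\\ 2(w_2w_3+w_1w_4) & w_1^2+w_3^2-w_2^2-w_4^2 & 2(w_3w_4-w_1w_2)\\ 2(w_2w_4-w_1w_3) & 2(w_3w_4+w_1w_2) & w_1^2+w_4^2-w_2^2-w_3^2\end{bmatrix}\in SO(3)$. $Q_i$ is the unique symmetric $4\times4$ matrix with $w^\top Q_iw=\|y_i-R(w)x_i\|_2^2$ for all $w\in\mathbb{S}^3$; $\lambda_{\min},\lambda_{\max}$ are its extreme eigenvalues. For $\mathcal{A}\in\mathbb{R}^{4(\ell+1)\times4(\ell+1)}$, $[\mathcal{A}]_{ij}$ ($0\le i,j\le\ell$) is the $4\times4$ block in rows $4i+1..4i+4$, columns $4j+1..4j+4$. An admissible dual matrix is a symmetric $\mathcal{D}\in\mathbb{R}^{4(\ell+1)\times4(\ell+1)}$ with $[\mathcal{D}]_{ii}+2[\mathcal{D}]_{0i}=0$ for $i=1,\dots,\ell$ and all blocks other than $[\mathcal{D}]_{ii},[\mathcal{D}]_{0i},[\mathcal{D}]_{i0}$ ($i\ge1$) equal to zero. *)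

From HB Require Import structures.
From mathcomp Require Import all_boot all_order all_algebra.
From mathcomp Require Import zify.
From mathcomp Require Import reals.

Set Implicit Arguments.
Unset Strict Implicit.
Unset Printing Implicit Defensive.

Import Order.TTheory GRing.Theory Num.Theory.
Local Open Scope ring_scope.

Lemma blk_idx_proof (l : nat) (i : 'I_l.+1) (a : 'I_4) : (4 * i + a < 4 * l.+1)%N.
Proof. have := ltn_ord i; have := ltn_ord a; lia. Qed.

Definition blk_idx (l : nat) (i : 'I_l.+1) (a : 'I_4) : 'I_(4 * l.+1) :=
  Ordinal (blk_idx_proof i a).

(* [A]_{ij} : the 4x4 block in rows 4i+1..4i+4, columns 4j+1..4j+4. *)
Definition blk {R : Type} (l : nat) (A : 'M[R]_(4 * l.+1)) (i j : 'I_l.+1) : 'M[R]_4 :=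
  \matrix_(a < 4, b < 4) A (blk_idx i a) (blk_idx j b).

Definition admissible {R : pzRingType} (l : nat) (D : 'M[R]_(4 * l.+1)) : Prop :=
  D^T = D /\
  (forall i : 'I_l.+1, i != ord0 -> blk D i i + 2%:R *: blk D ord0 i = 0) /\
  (forall i j : 'I_l.+1,
     ~ ((i == j) && (i != ord0) \/ (i == ord0) && (j != ord0) \/ (j == ord0) && (i != ord0)) ->
     blk D i j = 0).

Definition qf {R : pzRingType} (n : nat) (u : 'cV[R]_n) (A : 'M[R]_n) (v : 'cV[R]_n) : R :=
  (u^T *m A *m v) ord0 ord0.

Definition sqnorm {R : pzRingType} (n : nat) (v : 'cV[R]_n) : R :=
  \sum_(k < n) v k ord0 ^+ 2.

Definition rotq {R : pzRingType} (w : 'cV[R]_4) : 'M[R]_3 :=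
  let w1 := w 0%R ord0 in let w2 := w 1%R ord0 in
  let w3 := w 2%:R ord0 in let w4 := w 3%:R ord0 in
  \matrix_(i < 3, j < 3)
    match nat_of_ord i, nat_of_ord j with
    | 0, 0 => w1^+2 + w2^+2 - w3^+2 - w4^+2
    | 0, 1 => 2%:R * (w2 * w3 - w1 * w4)
    | 0, _ => 2%:R * (w2 * w4 + w1 * w3)
    | 1, 0 => 2%:R * (w2 * w3 + w1 * w4)
    | 1, 1 => w1^+2 + w3^+2 - w2^+2 - w4^+2
    | 1, _ => 2%:R * (w3 * w4 - w1 * w2)
    | _, 0 => 2%:R * (w2 * w4 - w1 * w3)
    | _, 1 => 2%:R * (w3 * w4 + w1 * w2)
    | _, _ => w1^+2 + w4^+2 - w2^+2 - w3^+2
    end.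

Definition psd {R : numDomainType} (n : nat) (A : 'M[R]_n) : Prop :=
  A^T = A /\ forall z : 'cV[R]_n, 0 <= qf z A z.

Definition pd {R : numDomainType} (n : nat) (A : 'M[R]_n) : Prop :=
  A^T = A /\ forall z : 'cV[R]_n, z != 0 -> 0 < qf z A z.

Definition is_lambda_min {R : realFieldType} (n : nat) (A : 'M[R]_n) (l : R) : Prop :=
  eigenvalue A l /\ forall m, eigenvalue A m -> l <= m.

Definition is_lambda_max {R : realFieldType} (n : nat) (A : 'M[R]_n) (l : R) : Prop :=
  eigenvalue A l /\ forall m, eigenvalue A m -> m <= l.

From HB Require Import structures.
From mathcomp Require Import all_boot all_order all_algebra.
From mathcomp Require Import reals ring lra.

Import Order.TTheory GRing.Theory Num.Theory.
Local Open Scope ring_scope.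

(* Setting z_0 = 0 in the dual inequality gives v^T [D]_{0i} v >= 0.  If
   v^T [D]_{0i} v = 0 for some v <> 0, then [D]_{0i} v = 0, and since what is left
   of the inequality is linear in z_0 apart from the term -mu |z_0|^2, also
   (2 [D]_{0i} - Q_i + c_i^2 I) v = 0: c_i^2 is an eigenvalue of Q_i.  On the
   unit sphere |y - R(w) x|^2 = |x|^2 + |y|^2 - 2 y^T R(w) x, and y^T R(w) x is the
   quadratic form of a symmetric M with M^2 = |x|^2 |y|^2 I.  Hence
   Q_i = (|x|^2 + |y|^2) I - 2 M has only the eigenvalues |x|^2 + |y|^2 +- 2 |x| |y|,
   and c_i^2 would be the smallest or the largest of them. *)

Section QuadraticForm.
Context {R : realFieldType} {n : nat}.
Implicit Types (u v w : 'cV[R]_n) (A B : 'M[R]_n).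

Lemma qfDl u w A v : qf (u + w) A v = qf u A v + qf w A v.
Proof. by rewrite /qf linearD /= !mulmxDl mxE. Qed.

Lemma qfDr u A v w : qf u A (v + w) = qf u A v + qf u A w.
Proof. by rewrite /qf mulmxDr mxE. Qed.

Lemma qfZl t u A v : qf (t *: u) A v = t * qf u A v.
Proof. by rewrite /qf linearZ /= -!scalemxAl mxE. Qed.

Lemma qfZr t u A v : qf u A (t *: v) = t * qf u A v.
Proof. by rewrite /qf -scalemxAr mxE. Qed.

Lemma qf0l A v : qf 0 A v = 0.
Proof. by rewrite -(scale0r 0) qfZl mul0r. Qed.

Lemma qf0r u A : qf u A 0 = 0.
Proof. by rewrite -(scale0r 0) qfZr mul0r. Qed.

Lemma qfBm u A B v : qf u (A - B) v = qf u A v - qf u B v.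
Proof. by rewrite /qf mulmxBr mulmxBl !mxE. Qed.

Lemma qfZm t u A v : qf u (t *: A) v = t * qf u A v.
Proof. by rewrite /qf -scalemxAr -scalemxAl mxE. Qed.

Lemma qf_sym u v A : A^T = A -> qf u A v = qf v A u.
Proof.
move=> AT; rewrite /qf -[in RHS](trmxK (v^T *m A *m u)) [in RHS]mxE.
by rewrite !trmx_mul trmxK AT mulmxA.
Qed.

Lemma qf_dot u A v : qf u A v = \sum_(k < n) u k ord0 * (A *m v) k ord0.
Proof. by rewrite /qf -mulmxA mxE; apply: eq_bigr => k _; rewrite mxE. Qed.

Lemma qf_scalar a u : qf u a%:M u = a * sqnorm u.
Proof.
rewrite qf_dot /sqnorm mulr_sumr; apply: eq_bigr => k _.
by rewrite mul_scalar_mx mxE mulrCA expr2.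
Qed.

Lemma qf_deltal k A v : qf (delta_mx k ord0) A v = (A *m v) k ord0.
Proof. by rewrite /qf trmx_delta -mulmxA -rowE mxE. Qed.

Lemma qf_delta j k A : qf (delta_mx j ord0) A (delta_mx k ord0) = A j k.
Proof. by rewrite qf_deltal -colE mxE. Qed.

Lemma sqnormZ t u : sqnorm (t *: u) = t ^+ 2 * sqnorm u.
Proof. by rewrite /sqnorm mulr_sumr; apply: eq_bigr => k _; rewrite mxE exprMn. Qed.

Lemma sqnorm_gt0 u : u != 0 -> 0 < sqnorm u.
Proof.
move=> u0; rewrite lt_def sumr_ge0 ?andbT => [|k _]; last exact: sqr_ge0.
apply: contraNneq u0 => /eqP; rewrite psumr_eq0 => [/allP u0|k _]; last exact: sqr_ge0.
apply/eqP/matrixP => k j; rewrite ord1 mxE.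
by apply/eqP; rewrite -sqrf_eq0; apply: implyP (u0 k (mem_index_enum k)) _.
Qed.

Lemma sqnorm_subr u A v :
  sqnorm (u - A *m v) = sqnorm u + sqnorm (A *m v) - 2%:R * qf u A v.
Proof.
rewrite qf_dot /sqnorm mulr_sumr -big_split -sumrB /=.
by apply: eq_bigr => k _; rewrite !mxE; ring.
Qed.

Lemma mulmx_eq0_qf A v : (forall u, qf u A v = 0) -> A *m v = 0.
Proof. by move=> Av; apply/matrixP => k j; rewrite ord1 -qf_deltal Av mxE. Qed.

Lemma quad_ge0_lin_eq0 (a g : R) : (forall t, 0 <= a * t ^+ 2 + g * t) -> g = 0.
Proof.
move=> H; set K := `|a| + 1.
have K0 : 0 < K by rewrite /K ltr_pwDr.
have aK : a * (g / K) ^+ 2 <= (K - 1) * (g / K) ^+ 2.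
  by rewrite ler_wpM2r ?sqr_ge0 // /K addrK ler_norm.
have := H (- g / K); rewrite mulNr sqrrN.
have -> : g * - (g / K) = - K * (g / K) ^+ 2 by field; rewrite gt_eqF.
move=> h; have : (g / K) ^+ 2 <= 0 by nra.
rewrite (@le_eqVlt _ _ _ 0) ltNge sqr_ge0 orbF sqrf_eq0 mulf_eq0 invr_eq0.
by rewrite (gt_eqF K0) orbF => /eqP.
Qed.

Lemma psd_qf_eq0 {A v} : psd A -> qf v A v = 0 -> A *m v = 0.
Proof.
move=> [AT A_ge0] vAv; apply: mulmx_eq0_qf => u.
suff : 2%:R * qf u A v = 0 by lra.
apply: (@quad_ge0_lin_eq0 (qf u A u)) => t.
have := A_ge0 (v + t *: u).
by rewrite !qfDl !qfDr !qfZl !qfZr vAv (qf_sym v u A AT); nra.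
Qed.

Lemma qf_eq0_sym (C : 'M[R]_n) :
  C^T = C -> (forall w, qf w C w = 0) -> C = 0.
Proof.
move=> CT C0; apply/matrixP => j k; rewrite -qf_delta mxE.
set u := delta_mx j ord0; set v := delta_mx k ord0.
have := C0 (u + v); rewrite !qfDl !qfDr !C0 (qf_sym v u C CT); lra.
Qed.

End QuadraticForm.

Lemma sym_qf_sphere_eq (R : rcfType) n (A B : 'M[R]_n) :
  A^T = A -> B^T = B -> (forall w, sqnorm w = 1 -> qf w A w = qf w B w) -> A = B.
Proof.
move=> AT BT AB; apply/eqP; rewrite -subr_eq0; apply/eqP/qf_eq0_sym.
  by rewrite linearB /= AT BT.
move=> w; rewrite qfBm; have [->|w0] := eqVneq w 0; first by rewrite !qf0l subrr.
have w_gt0 : 0 < sqnorm w by rewrite sqnorm_gt0.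
set s := Num.sqrt (sqnorm w).
have s_gt0 : 0 < s by rewrite sqrtr_gt0.
have s0 : s^-1 != 0 by rewrite invr_eq0 gt_eqF.
have := AB (s^-1 *: w); rewrite sqnormZ exprVn sqr_sqrtr ?ltW // mulVf ?gt_eqF //.
by rewrite !qfZl !qfZr => /(_ erefl) /(mulfI s0) /(mulfI s0) ->; rewrite subrr.
Qed.

Lemma sum_ord3 (V : nmodType) (F : 'I_3 -> V) : \sum_(k < 3) F k = F 0 + F 1 + F 2%:R.
Proof.
by rewrite !big_ord_recl big_ord0 addr0 addrA; congr (F _ + F _ + F _); apply: val_inj.
Qed.

Lemma sum_ord4 (V : nmodType) (F : 'I_4 -> V) :
  \sum_(k < 4) F k = F 0 + F 1 + F 2%:R + F 3%:R.
Proof.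
by rewrite !big_ord_recl big_ord0 addr0 !addrA; congr (F _ + F _ + F _ + F _); apply: val_inj.
Qed.

Section Rotation.
Context {R : comPzRingType} (x y : 'cV[R]_3).
Local Notation x0 := (x 0 ord0).
Local Notation x1 := (x 1 ord0).
Local Notation x2 := (x 2%:R ord0).
Local Notation y0 := (y 0 ord0).
Local Notation y1 := (y 1 ord0).
Local Notation y2 := (y 2%:R ord0).

Definition rot_form : 'M[R]_4 := \matrix_(j < 4, k < 4)
  match nat_of_ord j, nat_of_ord k with
  | 0, 0 => y0*x0 + y1*x1 + y2*x2
  | 0, 1 | 1, 0 => y2*x1 - y1*x2
  | 0, 2 | 2, 0 => y0*x2 - y2*x0
  | 0, 3 | 3, 0 => y1*x0 - y0*x1
  | 1, 1 => y0*x0 - y1*x1 - y2*x2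
  | 1, 2 | 2, 1 => y0*x1 + y1*x0
  | 1, 3 | 3, 1 => y0*x2 + y2*x0
  | 2, 2 => - y0*x0 + y1*x1 - y2*x2
  | 2, 3 | 3, 2 => y1*x2 + y2*x1
  | _, _ => - y0*x0 - y1*x1 + y2*x2
  end.

Lemma rot_form_sym : rot_form^T = rot_form.
Proof.
by apply/matrixP => j k; rewrite !mxE; case: j k => [[|[|[|[|//]]]] ?] [[|[|[|[|//]]]] ?].
Qed.

Lemma rot_form_sqr : rot_form *m rot_form = (sqnorm x * sqnorm y)%:M.
Proof.
apply/matrixP => j k; rewrite !mxE sum_ord4 /sqnorm !sum_ord3.
by case: j k => [[|[|[|[|//]]]] ?] [[|[|[|[|//]]]] ?]; rewrite !mxE /=; ring.
Qed.

Lemma qf_rot_form w : qf w rot_form w = qf y (rotq w) x.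
Proof. by rewrite /qf !mxE !sum_ord4 !sum_ord3 !mxE !sum_ord4 !sum_ord3 !mxE /=; ring. Qed.

Lemma sqnorm_rotq w : sqnorm (rotq w *m x) = sqnorm w ^+ 2 * sqnorm x.
Proof. by rewrite /sqnorm sum_ord4 !sum_ord3 !mxE !sum_ord3 !mxE /=; ring. Qed.

End Rotation.

Lemma residual_mxE {R : rcfType} {x y : 'cV[R]_3} {Q : 'M[R]_4} :
  Q^T = Q -> (forall w, sqnorm w = 1 -> qf w Q w = sqnorm (y - rotq w *m x)) ->
  Q = (sqnorm x + sqnorm y)%:M - 2%:R *: rot_form x y.
Proof.
move=> QT HQ; apply: sym_qf_sphere_eq => // [|w w1].
  by rewrite linearB /= tr_scalar_mx linearZ /= rot_form_sym.
by rewrite HQ // sqnorm_subr sqnorm_rotq qfBm qf_scalar qfZm qf_rot_form w1; ring.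
Qed.

Lemma eigenvalue_scalar_subr {F : fieldType} {n} {M : 'M[F]_n} {p s c m : F} :
  M *m M = p%:M -> eigenvalue (s%:M - c *: M) m -> (m - s) ^+ 2 = c ^+ 2 * p.
Proof.
move=> MM /eigenvalueP [v vA v0].
have vM : c *: (v *m M) = (s - m) *: v.
  apply/eqP; move/eqP: vA; rewrite mulmxBr mul_mx_scalar -scalemxAr scalerBl.
  by rewrite subr_eq addrC -subr_eq eq_sym.
have : (c ^+ 2 * p) *: v = (m - s) ^+ 2 *: v.
  have -> : (c ^+ 2 * p) *: v = c *: ((c *: (v *m M)) *m M).
    by rewrite -scalemxAl scalerA -mulmxA MM mul_mx_scalar scalerA expr2.
  by rewrite vM -scalemxAl scalerA mulrC -scalerA vM scalerA -sqrrN opprB expr2.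
move/eqP; rewrite -subr_eq0 -scalerBl scalemx_eq0 (negbTE v0) orbF subr_eq0.
by move/eqP.
Qed.

Lemma eigenvalue_extremal {R : realFieldType} {n} {A : 'M[R]_n} {s d a : R} :
  (forall m, eigenvalue A m -> (m - s) ^+ 2 = d) -> eigenvalue A a ->
  is_lambda_min A a \/ is_lambda_max A a.
Proof.
move=> Asq Aa; have := Asq a Aa.
case: (lerP a s) => sa da; [left | right]; split=> // m /Asq dm; nra.
Qed.

Lemma sym_eigenvalue {F : fieldType} {n} {A : 'M[F]_n} {v : 'cV[F]_n} {a : F} :
  A^T = A -> v != 0 -> A *m v = a *: v -> eigenvalue A a.
Proof.
move=> AT v0 Av; apply/eigenvalueP; exists v^T.
  by rewrite -AT -trmx_mul Av linearZ.
by rewrite trmx_eq0.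
Qed.

Section BlockInequality.
Context {R : realFieldType} {n : nat} {mu c : R} {B Q : 'M[R]_n}.
Hypothesis B_sym : B^T = B.
Hypothesis B_ineq : forall u v,
  0 <= - mu * sqnorm u + 2%:R * qf v B v - qf u (2%:R *: B - Q + c *: 1%:M) v.

Lemma block_ineq_psd : psd B.
Proof.
split=> // v; have := B_ineq (0 *: v) v.
by rewrite sqnormZ qfZl expr0n /= !mul0r mulr0 subr0 add0r pmulr_rge0.
Qed.

Lemma block_ineq_kernel v : qf v B v = 0 -> Q *m v = c *: v.
Proof.
move=> vBv; have Bv := psd_qf_eq0 block_ineq_psd vBv.
have : (2%:R *: B - Q + c *: 1%:M) *m v = 0.
  apply: mulmx_eq0_qf => u; apply/eqP; rewrite -oppr_eq0; apply/eqP.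
  apply: (@quad_ge0_lin_eq0 _ (- mu * sqnorm u)) => t.
  by have := B_ineq (t *: u) v; rewrite sqnormZ qfZl vBv; lra.
rewrite mulmxDl mulmxBl -!scalemxAl Bv mul1mx scaler0 sub0r addrC => /eqP.
by rewrite subr_eq0 => /eqP.
Qed.

Lemma block_ineq_pd : Q^T = Q -> ~~ eigenvalue Q c -> pd B.
Proof.
move=> Q_sym Qc; split=> // v v0; rewrite lt_def (block_ineq_psd.2 v) andbT.
apply: contraNneq Qc => vBv.
exact: sym_eigenvalue Q_sym v0 (block_ineq_kernel v vBv).
Qed.

End BlockInequality.

Lemma dual_ineq_block {R : realFieldType} {n l} {mu : R} {B M : 'I_l -> 'M[R]_n} :
  (forall z : 'I_l.+1 -> 'cV[R]_n,
     0 <= - mu * sqnorm (z ord0)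
          + 2%:R * (\sum_(i < l) qf (z (lift ord0 i)) (B i) (z (lift ord0 i)))
          - \sum_(i < l) qf (z ord0) (M i) (z (lift ord0 i))) ->
  forall i u v, 0 <= - mu * sqnorm u + 2%:R * qf v (B i) v - qf u (M i) v.
Proof.
move=> H i u v.
have := H (fun k => if k == ord0 then u else if k == lift ord0 i then v else 0).
rewrite /= [in X in 2%:R * X](bigD1 i) // [in X in _ - X](bigD1 i) //= eqxx.
rewrite !big1 ?addr0 // => j ji;
  by rewrite (inj_eq (@lift_inj _ ord0)) (negbTE ji) ?qf0l ?qf0r.
Qed.

Lemma trmx_blk (R : Type) l (A : 'M[R]_(4 * l.+1)) i j : (blk A i j)^T = blk A^T j i.
Proof. by apply/matrixP => a b; rewrite !mxE. Qed.

Lemma admissible_blk0_sym (R : numFieldType) l (D : 'M[R]_(4 * l.+1)) i :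
  admissible D -> i != ord0 -> (blk D ord0 i)^T = blk D ord0 i.
Proof.
move=> [D_sym [D_diag _]] i0.
have B_eq : blk D ord0 i = - 2%:R^-1 *: blk D i i.
  have -> : blk D i i = - (2%:R *: blk D ord0 i) by apply/eqP; rewrite -addr_eq0 D_diag.
  by rewrite scaleNr scalerN opprK scalerA mulVf ?scale1r // pnatr_eq0.
by rewrite B_eq linearZ /= trmx_blk D_sym.
Qed.

Theorem lemmaB2 (R : realType) (l : nat)
  (y x : 'I_l -> 'cV[R]_3) (c2 : 'I_l -> R) (Q : 'I_l -> 'M[R]_4)
  (mu : R) (D : 'M[R]_(4 * l.+1)) :
  (forall i, 0 <= c2 i) ->
  (forall i, (Q i)^T = Q i) ->
  (forall i (w : 'cV[R]_4), sqnorm w = 1 ->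
     qf w (Q i) w = sqnorm (y i - rotq w *m x i)) ->
  admissible D ->
  (forall z : 'I_l.+1 -> 'cV[R]_4,
     0 <= - mu * sqnorm (z ord0)
          + 2%:R * (\sum_(i < l) qf (z (lift ord0 i)) (blk D ord0 (lift ord0 i)) (z (lift ord0 i)))
          - \sum_(i < l) qf (z ord0)
               (2%:R *: blk D ord0 (lift ord0 i) - Q i + c2 i *: 1%:M) (z (lift ord0 i))) ->
  (forall i : 'I_l, psd (blk D ord0 (lift ord0 i))) /\
  (forall i : 'I_l,
     (forall lm, is_lambda_min (Q i) lm -> c2 i != lm) ->
     (forall lM, is_lambda_max (Q i) lM -> c2 i != lM) ->
     pd (blk D ord0 (lift ord0 i))).
Proof.
move=> _ Q_sym Q_res adm H.
have B_sym (i : 'I_l) : (blk D ord0 (lift ord0 i))^T = blk D ord0 (lift ord0 i).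
  by apply: admissible_blk0_sym adm _; rewrite eq_sym neq_lift.
have B_ineq := dual_ineq_block H.
split=> i; first exact: block_ineq_psd (B_sym i) (B_ineq i).
move=> not_min not_max; apply: block_ineq_pd (B_sym i) (B_ineq i) (Q_sym i) _.
apply/negP => Qc.
have Q_spec m : eigenvalue (Q i) m -> (m - (sqnorm (x i) + sqnorm (y i))) ^+ 2
                                     = 2%:R ^+ 2 * (sqnorm (x i) * sqnorm (y i)).
  rewrite (residual_mxE (Q_sym i) (Q_res i)).
  exact: eigenvalue_scalar_subr (rot_form_sqr _ _).
have [/not_min|/not_max] := eigenvalue_extremal Q_spec Qc; by rewrite eqxx.
Qed.
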